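(* Let $p$ be a prime, let $\mathcal{F}$ be a fusion system (not necessarily saturated) on a finite $p$-group $S$, and let $\mathcal{H}$ be a collection of subgroups of $S$ which is closed under $\mathcal{F}$-conjugation and under taking subgroups. Let $X_0$ be a virtual $S$-set with rational coefficients such that $|X_0^P|=|X_0^{P'}|$ for all $P,P'\le S$ with $P,P'\notin\mathcal{H}$ that are $\mathcal{F}$-conjugate. Then there exists a virtual $S$-set $X$ with rational coefficients such that: (a) $|X^P|=|X^{P'}|$ for all $\mathcal{F}$-conjugate $P,P'\le S$; (b) $|X^P|=|X_0^P|$ for all $P\le S$ with $P\notin\mathcal{H}$; and (c) $X-X_0$ is a virtual $S$-set with nonnegative rational coefficients.
   Context: A fusion system $\mathcal{F}$ on a finite $p$-group $S$ is a category whose objects are the subgroups of $S$, whose morphism sets $\mathrm{Hom}_{\mathcal{F}}(P,Q)$ are sets of injective group homomorphisms $P\to Q$, such that every map $u\mapsto sus^{-1}$ ($s\in S$, $sPs^{-1}\le Q$) lies in $\mathrm{Hom}_{\mathcal{F}}(P,Q)$, and every $\varphi\in\mathrm{Hom}_{\mathcal{F}}(P,Q)$ induces an isomorphism $P\to\varphi(P)$ in $\mathcal{F}$ whose inverse is also in $\mathcal{F}$; no saturation is assumed. Subgroups $P,P'\le S$ are $\mathcal{F}$-conjugate if there is an isomorphism $P\to P'$ in $\mathcal{F}$. A virtual $S$-set with rational coefficients is an element $\sum_H c_H\, S/H$ of $\mathbb{Q}\otimes_{\mathbb{Z}}B(S)$, where $H$ runs over representatives of $S$-conjugacy classes of subgroups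 of $S$ and $c_H\in\mathbb{Q}$; it has nonnegative rational coefficients if all $c_H\ge 0$. For such $X=\sum_H c_H\,S/H$ and $P\le S$, $|X^P|$ denotes $\sum_H c_H\,|(S/H)^P|$, where $(S/H)^P$ is the set of $P$-fixed points of the $S$-set $S/H$. *)

From HB Require Import structures.
From mathcomp Require Import all_boot all_order all_algebra all_fingroup all_solvable.
Set Implicit Arguments. Unset Strict Implicit. Unset Printing Implicit Defensive.
Import GRing.Theory Num.Theory.

Local Open Scope group_scope.

Section FusionDefs.
Variable gT : finGroupType.

Definition is_inj_hom (P Q : {set gT}) (f : gT -> gT) : Prop :=
  {in P &, {morph f : x y / x * y}} /\ {in P &, injective f} /\ f @: P \subset Q.

(* A (not necessarily saturated) fusion system on S.  A morphism P -> Q is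
   represented by a function gT -> gT; only its values on P matter.
   F P Q f means "(f restricted to P) lies in Hom_F(P,Q)". *)
Definition fusion_system (S : {group gT})
    (F : {group gT} -> {group gT} -> (gT -> gT) -> Prop) : Prop :=
  [/\ (forall (P Q : {group gT}) f, F P Q f ->
         [/\ P \subset S, Q \subset S & is_inj_hom P Q f]),
      (* conjugation maps u |-> s u s^-1 = u ^ s^-1 *)
      (forall (P Q : {group gT}) s, P \subset S -> Q \subset S -> s \in S ->
         P :^ s^-1 \subset Q ->
         exists2 f, F P Q f & {in P, forall u, f u = u ^ s^-1}) &
      (forall (P Q : {group gT}) f, F P Q f ->
         exists R : {group gT}, [/\ (R : {set gT}) = f @: P,
           (exists2 g, F P R g & {in P, forall u, g u = f u}) &
           (exists2 h, F R P h & {in P, forall u, h (f u) = u})])].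

Definition fconj (F : {group gT} -> {group gT} -> (gT -> gT) -> Prop)
    (P P' : {group gT}) : Prop :=
  exists2 f, F P P' f & f @: P = P'.

Definition subgrp_sets (S : {group gT}) : {set {set gT}} :=
  [set H : {set gT} | (H \subset S) && group_set H].

Definition subgroup_classes (S : {group gT}) : {set {set {set gT}}} :=
  [set H :^: S | H in subgrp_sets S].

Definition class_rep (C : {set {set gT}}) : {set gT} := odflt set0 [pick H in C].

(* |(S/H)^P| : number of left cosets xH (x in S) fixed by all u in P *)
Definition fix_card (S : {group gT}) (P H : {set gT}) : nat :=
  #|[set A in lcosets H S | [forall u in P, u *: A == A]]|.

(* A virtual S-set with rational coefficients is a function
   c : (classes of subgroups) -> rat, X = sum_C c C * S/(class_rep C).
   Its number of P-fixed points: *)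
Definition vfix (S : {group gT}) (X : {set {set gT}} -> rat) (P : {set gT}) : rat :=
  (\sum_(C in subgroup_classes S) X C * (fix_card S P (class_rep C))%:R)%R.

End FusionDefs.

(* Work downwards through the orders of the subgroups in H.  Suppose the
   marks |X^P| already agree for all P in H of order > n, and agree with
   those of X0 outside H.  Let M bound |X^K| for every subgroup K, and add
   (M - |X^K|) / |(S/K)^K| copies of S/K for each class of K in H of order
   n.  Since (S/K)^R is nonempty only when R lies in a conjugate of K, the
   marks of larger subgroups and of subgroups outside H (which is closed
   under subgroups) do not move, while every P in H of order n gets mark M.
   At the end all subgroups in H of equal order share their marks, and
   F-conjugate subgroups have equal order and are both inside or both
   outside H. *)
From HB Require Import structures.
From mathcomp Require Import all_boot all_order all_algebra all_fingroup all_solvable.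
Import Order.TTheory GRing.Theory Num.Theory.
Set Implicit Arguments. Unset Strict Implicit.

Section Marks.
Variable gT : finGroupType.
Implicit Types (S H : {group gT}) (R : {set gT}).
Local Open Scope group_scope.

Lemma fix_card_neq0_subconj S H R : fix_card S R H != 0%N ->
  exists2 x, x \in S & R \subset H :^ x.
Proof.
rewrite /fix_card -lt0n card_gt0 => /set0Pn [A].
rewrite inE => /andP [/imsetP [x xS ->] /forall_inP fixA].
exists x^-1; first by rewrite groupV.
apply/subsetP => u uR; rewrite mem_conjg invgK conjgE.
have /eqP := fixA u uR; rewrite lcosetE => fix_xH.
by have := lcoset_refl H (u * x); rewrite lcosetM fix_xH mem_lcoset mulgA.
Qed.

Lemma fix_card_self_gt0 S H : H \subset S -> (0 < fix_card S H H)%N.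
Proof.
move=> sHS; rewrite /fix_card card_gt0; apply/set0Pn; exists (1 *: (H : {set gT})).
rewrite inE; apply/andP; split; first by apply/imsetP; exists 1; rewrite ?lcosetE.
by apply/forall_inP => u uH; rewrite lcoset1 lcoset_id.
Qed.

Lemma fix_card_conjg_leq S R1 R y : y \in S ->
  (fix_card S R R1 <= fix_card S (R :^ y) R1)%N.
Proof.
move=> yS; rewrite /fix_card -(card_imset _ (@lcoset_inj _ y^-1)).
apply: subset_leq_card; apply/subsetP => B /imsetP [A].
rewrite inE => /andP [/imsetP [x xS ->] /forall_inP fixA] ->.
rewrite inE; apply/andP; split.
  by apply/imsetP; exists (y^-1 * x); rewrite ?groupM ?groupV // !lcosetE lcosetM.
apply/forall_inP => v; rewrite mem_conjg => /fixA /eqP fix_xR1.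
apply/eqP; rewrite -{2}fix_xR1 -!lcosetM.
by congr (_ *: _); rewrite conjgE invgK !mulgA mulVg mul1g.
Qed.

Lemma fix_card_conjg S R1 R y : y \in S ->
  fix_card S (R :^ y) R1 = fix_card S R R1.
Proof.
move=> yS; apply/eqP; rewrite eqn_leq fix_card_conjg_leq // andbT.
by rewrite -{2}(conjsgK y R) fix_card_conjg_leq ?groupV.
Qed.

Lemma vfix_conjg S (X : {set {set gT}} -> rat) R y : y \in S ->
  vfix S X (R :^ y) = vfix S X R.
Proof. by move=> yS; apply: eq_bigr => C _; rewrite fix_card_conjg. Qed.

Lemma conjugates_conjg_id S R x : x \in S -> (R :^ x) :^: S = R :^: S.
Proof. by move=> xS; rewrite conjugates_conj lcoset_id. Qed.

Lemma subgroup_classesP S C : C \in subgroup_classes S ->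
  exists K : {group gT}, [/\ K \subset S, class_rep C = K & C = K :^: S].
Proof.
case/imsetP => A; rewrite inE => /andP [sAS gA] ->.
rewrite /class_rep; case: pickP => [B | /(_ A)]; last first.
  by rewrite (_ : A \in A :^: S) //; apply/imsetP; exists 1; rewrite ?conjsg1.
case/imsetP=> z zS ->; exists (Group gA :^ z)%G; split => //=.
  by rewrite -(conjGid zS) conjSg.
by rewrite conjugates_conjg_id.
Qed.

End Marks.

Section Layers.
Variable gT : finGroupType.
Variables (S : {group gT}) (F : {group gT} -> {group gT} -> (gT -> gT) -> Prop)
  (Hc : {set {set gT}}) (X0 : {set {set gT}} -> rat).
Hypothesis fusF : fusion_system S F.
Hypothesis sHc_S : Hc \subset subgrp_sets S.
Hypothesis Hc_fconj : forall P P' : {group gT}, (P : {set gT}) \in Hc ->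
  fconj F P P' -> (P' : {set gT}) \in Hc.
Hypothesis Hc_sub : forall P Q : {group gT}, (P : {set gT}) \in Hc -> Q \subset P ->
  (Q : {set gT}) \in Hc.
Local Open Scope group_scope.

Lemma Hc_subS R : R \in Hc -> R \subset S.
Proof. by move=> /(subsetP sHc_S); rewrite inE => /andP []. Qed.

Lemma Hc_conjg (P : {group gT}) y : (P : {set gT}) \in Hc -> y \in S ->
  P :^ y \in Hc.
Proof.
move=> PH yS; case: fusF => _ F_conj _.
have sPyS : (P :^ y)%G \subset S by rewrite /= -(conjGid yS) conjSg Hc_subS.
have := F_conj P (P :^ y)%G y^-1 (Hc_subS PH) sPyS (groupVr yS).
rewrite invgK => /(_ (subxx _)) [f Ff fE].
apply: (Hc_fconj PH); exists f => //=.
by apply: eq_in_imset => u uP; rewrite fE // invgK.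
Qed.

Lemma fconj_sym (P P' : {group gT}) : fconj F P P' -> fconj F P' P.
Proof.
case: fusF => _ _ F_iso; case=> f Ff fP.
have [R [Rdef _ [h Fh hK]]] := F_iso _ _ _ Ff.
have RP' : R = P' by apply: group_inj; rewrite Rdef fP.
subst R; exists h => //; rewrite -fP -imset_comp -[RHS]imset_id.
by apply: eq_in_imset => u uP /=; apply: hK.
Qed.

Lemma card_fconj (P P' : {group gT}) : fconj F P P' -> #|P'| = #|P|.
Proof.
case: fusF => F_hom _ _; case=> f Ff fP.
have [_ _ [_ [injf _]]] := F_hom _ _ _ Ff.
by rewrite -fP card_in_imset.
Qed.

Lemma fix_card_Hc_rep n (R : {group gT}) C :
  C \in subgroup_classes S -> class_rep C \in Hc -> #|class_rep C| = n ->
  fix_card S R (class_rep C) != 0%N ->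
  [/\ (R : {set gT}) \in Hc, (#|R| <= n)%N & (#|R| = n -> C = R :^: S)].
Proof.
move=> /subgroup_classesP [K [_ -> ->]] KH Kn /fix_card_neq0_subconj [x xS sRKx].
have RH : (R : {set gT}) \in Hc by apply: (Hc_sub (P := (K :^ x)%G)); rewrite ?Hc_conjg.
have leRn : (#|R| <= n)%N by rewrite -Kn -(cardJg K x) subset_leq_card.
split => // Rn; suff -> : (R : {set gT}) = K :^ x by rewrite conjugates_conjg_id.
by apply/eqP; rewrite eqEcard sRKx cardJg Kn Rn leqnn.
Qed.

Local Open Scope ring_scope.

Definition layer_inv (X : {set {set gT}} -> rat) n :=
  [/\ forall C, C \in subgroup_classes S -> 0 <= X C - X0 C,
      forall R : {group gT}, R \subset S -> (R : {set gT}) \notin Hc ->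
        vfix S X R = vfix S X0 R &
      forall P P' : {group gT}, (P : {set gT}) \in Hc -> (P' : {set gT}) \in Hc ->
        (n <= #|P|)%N -> #|P| = #|P'| -> vfix S X P = vfix S X P'].

Lemma layer_inv_init n : (#|S| < n)%N -> layer_inv X0 n.
Proof.
move=> ltSn; split=> // [C _ | P P' PH _ leP]; first by rewrite subrr.
by have := leq_trans ltSn (leq_trans leP (subset_leq_card (Hc_subS PH))); rewrite ltnn.
Qed.

Section Raise.
Variables (X : {set {set gT}} -> rat) (n : nat).

Definition mark_bound := \sum_(K in subgrp_sets S) `|vfix S X K|.

Definition raise_incr C :=
  if (class_rep C \in Hc) && (#|class_rep C| == n)
  then (mark_bound - vfix S X (class_rep C)) / (fix_card S (class_rep C) (class_rep C))%:R
  else 0.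

Definition raise_layer C := X C + raise_incr C.

Lemma vfix_le_mark_bound K : K \in Hc -> vfix S X K <= mark_bound.
Proof.
move=> KH; rewrite /mark_bound (bigD1 K) ?(subsetP sHc_S) //=.
by apply: le_trans (ler_norm _) _; rewrite lerDl sumr_ge0.
Qed.

Lemma raise_incr_ge0 C : 0 <= raise_incr C.
Proof.
rewrite /raise_incr; case: ifP => // /andP [KH _].
by rewrite divr_ge0 ?ler0n // subr_ge0 vfix_le_mark_bound.
Qed.

Lemma vfix_raise_layer R : vfix S raise_layer R =
  vfix S X R + \sum_(C in subgroup_classes S) raise_incr C * (fix_card S R (class_rep C))%:R.
Proof. by rewrite /vfix -big_split; apply: eq_bigr => C _; rewrite mulrDl. Qed.

Lemma vfix_raise_layer_id (R : {group gT}) :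
  ((R : {set gT}) \in Hc -> (n < #|R|)%N) -> vfix S raise_layer R = vfix S X R.
Proof.
move=> bigR; rewrite vfix_raise_layer big1 ?addr0 // => C CC.
rewrite /raise_incr; case: ifP => [/andP [KH /eqP Kn] | _]; last by rewrite mul0r.
have [-> | /eqP fix_nz] := fix_card S R (class_rep C) =P 0%N; first by rewrite mulr0.
have [RH leRn _] := fix_card_Hc_rep CC KH Kn fix_nz.
by have := bigR RH; rewrite ltnNge leRn.
Qed.

Lemma vfix_raise_layer_bound (R : {group gT}) :
  (R : {set gT}) \in Hc -> #|R| = n -> vfix S raise_layer R = mark_bound.
Proof.
move=> RH Rn; have sRS := Hc_subS RH.
have CR : R :^: S \in subgroup_classes S.
  by apply/imsetP; exists (R : {set gT}); rewrite ?inE ?sRS ?groupP.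
rewrite vfix_raise_layer (bigD1 (R :^: S)) //= big1 ?addr0; last first.
  move=> C /andP [CC neC]; rewrite /raise_incr.
  case: ifP => [/andP [KH /eqP Kn] | _]; last by rewrite mul0r.
  have [-> | /eqP fix_nz] := fix_card S R (class_rep C) =P 0%N; first by rewrite mulr0.
  have [_ _ /(_ Rn) CE] := fix_card_Hc_rep CC KH Kn fix_nz.
  by rewrite CE eqxx in neC.
have [K [_ KE CE]] := subgroup_classesP CR.
have /imsetP [z zS Kz] : (K : {set gT}) \in R :^: S.
  by rewrite CE; apply/imsetP; exists 1%g; rewrite ?conjsg1.
have fix_nz : (fix_card S R (R :^ z))%:R != 0 :> rat.
  rewrite pnatr_eq0 -lt0n -{1}(conjsgK z R) fix_card_conjg ?groupV //.
  by rewrite fix_card_self_gt0 // -(conjGid zS) conjSg.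
rewrite /raise_incr KE Kz Hc_conjg // cardJg Rn eqxx /=.
by rewrite fix_card_conjg // vfix_conjg // mulfVK // addrC subrK.
Qed.

Lemma layer_inv_raise : layer_inv X n.+1 -> layer_inv raise_layer n.
Proof.
case=> X_ge X0_out X_eq; split.
- by move=> C CC; rewrite /raise_layer addrAC addr_ge0 ?X_ge ?raise_incr_ge0.
- move=> R sRS RnH; rewrite vfix_raise_layer_id ?X0_out // => RH.
  by rewrite RH in RnH.
- move=> P P' PH P'H; rewrite leq_eqVlt => /orP [/eqP nP | ltnP] PP'.
    by rewrite !vfix_raise_layer_bound // -?PP' nP.
  by rewrite !vfix_raise_layer_id ?(X_eq P P') // => _; rewrite -?PP'.
Qed.

End Raise.

Lemma layer_inv_exists k n : (#|S| < n + k)%N -> exists X, layer_inv X n.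
Proof.
elim: k n => [|k IHk] n; first by rewrite addn0 => /layer_inv_init; exists X0.
by rewrite addnS -addSn => /IHk [X /layer_inv_raise ?]; exists (raise_layer X n).
Qed.

End Layers.

Unset Implicit Arguments.
Theorem lemma3 (gT : finGroupType) (p : nat) (S : {group gT})
  (F : {group gT} -> {group gT} -> (gT -> gT) -> Prop)
  (Hc : {set {set gT}}) (X0 : {set {set gT}} -> rat) :
  prime p -> (p.-group S)%g -> fusion_system S F ->
  Hc \subset subgrp_sets S ->
  (forall P P' : {group gT}, (P : {set gT}) \in Hc -> fconj F P P' ->
     (P' : {set gT}) \in Hc) ->
  (forall P Q : {group gT}, (P : {set gT}) \in Hc -> Q \subset P ->
     (Q : {set gT}) \in Hc) ->
  (forall P P' : {group gT}, P \subset S -> P' \subset S ->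
     (P : {set gT}) \notin Hc -> (P' : {set gT}) \notin Hc -> fconj F P P' ->
     vfix S X0 P = vfix S X0 P') ->
  exists X : {set {set gT}} -> rat,
    [/\ (forall P P' : {group gT}, P \subset S -> P' \subset S -> fconj F P P' ->
           vfix S X P = vfix S X P'),
        (forall P : {group gT}, P \subset S -> (P : {set gT}) \notin Hc ->
           vfix S X P = vfix S X0 P) &
        (forall C, C \in subgroup_classes S -> (0 <= X C - X0 C)%R)].
Proof.
move=> _ _ fusF sHc_S Hc_fconj Hc_sub X0_eq.
have [X [X_ge X0_out X_eq]] :=
  @layer_inv_exists gT S F Hc X0 fusF sHc_S Hc_fconj Hc_sub #|S|.+1 0 (ltnSn _).
exists X; split => // P P' sPS sP'S PP'.
have cardP' := card_fconj fusF PP'.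
have [PH | PnH] := boolP ((P : {set gT}) \in Hc).
  by apply: X_eq; rewrite ?cardP' // (Hc_fconj _ _ PH PP').
have P'nH : (P' : {set gT}) \notin Hc.
  by apply: contra PnH => P'H; apply: Hc_fconj _ _ P'H (fconj_sym fusF PP').
by rewrite !X0_out //; apply: X0_eq.
Qed.
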